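(* Let $A,B$ be smooth functions of $\rho$ on an interval containing $[\rho_-,\rho_+]$ with $A^2+B^2=1$ at $\rho=\rho_\pm$ and $A^2+B^2>1$ on $(\rho_-,\rho_+)$. Suppose $A<0$ on $(\rho_-,\rho_+)$, that $A(\rho)=-1$ for exactly two values $\rho_1<\rho_2$ in $(\rho_-,\rho_+)$, and that there is $\rho_0\in(\rho_1,\rho_2)$ with $B(\rho_0)=0$, $B>0$ on $(\rho_-,\rho_0)$ and $B<0$ on $(\rho_0,\rho_+)$. Then the $(+)$ family generates exactly one horizon, the circle $\rho=\rho_1$, and the $(-)$ family generates exactly one horizon, the circle $\rho=\rho_2$.
   Context: Acoustic metric in the plane with polar coordinates $(\rho,\varphi)$: Hamiltonian $H=(\tau+A\xi_\rho+B\xi_\varphi/\rho)^2-\xi_\rho^2-(\xi_\varphi/\rho)^2$, $A=A(\rho)$, $B=B(\rho)$. The ergoregion is the annulus $\rho_-<\rho<\rho_+$ where $A^2+B^2>1$. Zero-energy null geodesics are the null bicharacteristics with $\tau=0$ parametrized by $t$; on them $\xi_\rho=\frac{-AB\pm\sqrt{A^2+B^2-1}}{A^2-1}\,\xi_\varphi/\rho$, the sign defining the $(\pm)$ family. Writing $s=\sqrt{A^2+B^2-1}$, their equations of motion in the ergoregion are $$\frac{d\rho^\pm}{dt}=\frac{A(A^2+B^2-1)\pm Bs}{A^2+B^2},\qquad \frac{d\varphi^\pm}{dt}=\frac{s\,(Bs\mp A)}{\rho\,(A^2+B^2)}.$$ A horizon generated by the $(\pm)$ family is a circle $\{\rho=c\}$,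 $c\in(\rho_-,\rho_+)$, which is a closed trajectory of that family, i.e. $d\rho^\pm/dt=0$ and $d\varphi^\pm/dt\neq0$ at $\rho=c$. *)

From Stdlib Require Import Reals Lra.
Open Scope R_scope.

Definition smooth_on (f : R -> R) (a b : R) : Prop :=
  exists D : nat -> R -> R,
    D 0%nat = f /\
    forall (k : nat) (x : R), a < x < b ->
      derivable_pt_lim (D k) x (D (S k) x).

(* The two families of zero-energy null geodesics. *)
Inductive family := Plus | Minus.

Definition fsgn (f : family) : R := match f with Plus => 1 | Minus => -1 end.

Definition sfun (A B : R -> R) (r : R) : R := sqrt (A r ^ 2 + B r ^ 2 - 1).

Definition drho (f : family) (A B : R -> R) (r : R) : R :=
  (A r * (A r ^ 2 + B r ^ 2 - 1) + fsgn f * B r * sfun A B r)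
  / (A r ^ 2 + B r ^ 2).

Definition dphi (f : family) (A B : R -> R) (r : R) : R :=
  sfun A B r * (B r * sfun A B r - fsgn f * A r)
  / (r * (A r ^ 2 + B r ^ 2)).

(* The circle {rho = c}, c in the ergoregion (rho_-, rho_+), is a horizon
   generated by family f: a closed trajectory of that family. *)
Definition is_horizon (f : family) (A B : R -> R) (rm rp c : R) : Prop :=
  rm < c < rp /\ drho f A B c = 0 /\ dphi f A B c <> 0.

(* On the ergoregion the radial numerator is s (A s + ± B) with s > 0, so
   d rho/dt vanishes iff A s = ∓ B; squaring gives (A^2 - 1)(A^2 + B^2) = 0,
   i.e. A = -1 (as A < 0), and then s = |B| forces ± B > 0.  At such a radius
   d phi/dt = B / rho, which is nonzero.  Hence the (+) horizons are the
   radii with A = -1 and B > 0, the (-) horizons those with A = -1 and B < 0,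
   and the sign pattern of B selects rho1 resp. rho2. *)

From Stdlib Require Import Reals Lra Psatz.
Open Scope R_scope.

Lemma fsgn_mul_self (f : family) : fsgn f * fsgn f = 1.
Proof. destruct f; simpl; ring. Qed.

Lemma sfun_sq (A B : R -> R) (r : R) :
  A r ^ 2 + B r ^ 2 >= 1 -> sfun A B r * sfun A B r = A r ^ 2 + B r ^ 2 - 1.
Proof. intro H; unfold sfun; apply sqrt_sqrt; lra. Qed.

Lemma sfun_pos (A B : R -> R) (r : R) : A r ^ 2 + B r ^ 2 > 1 -> 0 < sfun A B r.
Proof. intro H; unfold sfun; apply sqrt_lt_R0; lra. Qed.

Lemma sfun_at_A_eq_m1 (f : family) (A B : R -> R) (r : R) :
  A r = -1 -> fsgn f * B r > 0 -> sfun A B r = fsgn f * B r.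
Proof.
  intros HA HB; unfold sfun; rewrite HA.
  replace ((-1) ^ 2 + B r ^ 2 - 1) with ((fsgn f * B r) ^ 2)
    by (replace ((fsgn f * B r) ^ 2) with (fsgn f * fsgn f * B r ^ 2) by ring;
        rewrite fsgn_mul_self; ring).
  apply sqrt_pow2; lra.
Qed.

Lemma drho_eq0_iff (f : family) (A B : R -> R) (r : R) :
  A r ^ 2 + B r ^ 2 > 1 -> A r < 0 ->
  drho f A B r = 0 <-> A r = -1 /\ fsgn f * B r > 0.
Proof.
  intros Hergo HA; unfold drho.
  set (s := sfun A B r); set (sg := fsgn f).
  assert (Hs2 : s * s = A r ^ 2 + B r ^ 2 - 1) by (apply sfun_sq; lra).
  assert (Hs : 0 < s) by (apply sfun_pos; lra).
  assert (Hsg : sg * sg = 1) by apply fsgn_mul_self.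
  assert (Hnum : A r * (A r ^ 2 + B r ^ 2 - 1) + sg * B r * s
                 = s * (A r * s + sg * B r))
    by (rewrite <- Hs2; ring).
  rewrite Hnum; split.
  - intro H0.
    assert (Hlin : A r * s + sg * B r = 0).
    { apply Rmult_integral in H0; destruct H0 as [H0 | H0].
      - apply Rmult_integral in H0; destruct H0; [lra | assumption].
      - exfalso; revert H0; apply Rinv_neq_0_compat; lra. }
    assert (HB : B r = - sg * A r * s).
    { replace (B r) with (sg * (sg * B r)) by (rewrite <- Rmult_assoc, Hsg; ring).
      replace (sg * B r) with (- (A r * s)) by lra; ring. }
    assert (Hfac : (A r * A r - 1) * (A r * A r + B r * B r) = 0).
    { assert (HBsq : B r * B r = A r * A r * (s * s))
        by (rewrite HB at 1 2; replace (- sg * A r * s * (- sg * A r * s))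
              with (sg * sg * (A r * A r * (s * s))) by ring; rewrite Hsg; ring).
      nra. }
    apply Rmult_integral in Hfac; destruct Hfac as [Hfac | Hfac]; [split; nra | nra].
  - intros [HA1 HB].
    replace s with (sg * B r) by (symmetry; apply sfun_at_A_eq_m1; assumption).
    rewrite HA1.
    replace (-1 * (sg * B r) + sg * B r) with 0 by ring.
    unfold Rdiv; ring.
Qed.

Lemma dphi_at_A_eq_m1 (f : family) (A B : R -> R) (r : R) :
  r <> 0 -> A r = -1 -> fsgn f * B r > 0 -> dphi f A B r = B r / r.
Proof.
  intros Hr HA HB; unfold dphi.
  rewrite (sfun_at_A_eq_m1 f A B r HA HB), HA.
  replace (fsgn f * B r * (B r * (fsgn f * B r) - fsgn f * -1))
    with (fsgn f * fsgn f * B r * (B r ^ 2 + 1)) by ring.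
  rewrite fsgn_mul_self; field; split; [assumption | nra].
Qed.

Lemma is_horizon_iff (f : family) (A B : R -> R) (rm rp c : R) :
  0 < rm ->
  (forall r, rm < r < rp -> A r ^ 2 + B r ^ 2 > 1) ->
  (forall r, rm < r < rp -> A r < 0) ->
  is_horizon f A B rm rp c <-> rm < c < rp /\ A c = -1 /\ fsgn f * B c > 0.
Proof.
  intros Hrm Hergo HA; unfold is_horizon; split.
  - intros [Hc [Hd _]]; split; [assumption |].
    apply (drho_eq0_iff f A B c (Hergo c Hc) (HA c Hc)); assumption.
  - intros [Hc [HA1 HB]]; split; [assumption | split].
    + apply (drho_eq0_iff f A B c (Hergo c Hc) (HA c Hc)); split; assumption.
    + rewrite dphi_at_A_eq_m1 by (assumption || lra).
      assert (B c <> 0) by (intro H0; rewrite H0 in HB; lra).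
      unfold Rdiv; apply Rmult_integral_contrapositive; split;
        [assumption | apply Rinv_neq_0_compat; lra].
Qed.

Theorem theorem4p3 (A B : R -> R) (a b rm rp rho0 rho1 rho2 : R) :
  0 < rm -> rm < rp ->
  a < rm -> rp < b ->
  smooth_on A a b -> smooth_on B a b ->
  A rm ^ 2 + B rm ^ 2 = 1 ->
  A rp ^ 2 + B rp ^ 2 = 1 ->
  (forall r, rm < r < rp -> A r ^ 2 + B r ^ 2 > 1) ->
  (forall r, rm < r < rp -> A r < 0) ->
  rm < rho1 -> rho1 < rho2 -> rho2 < rp ->
  A rho1 = -1 -> A rho2 = -1 ->
  (forall r, rm < r < rp -> A r = -1 -> r = rho1 \/ r = rho2) ->
  rho1 < rho0 < rho2 ->
  B rho0 = 0 ->
  (forall r, rm < r < rho0 -> B r > 0) ->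
  (forall r, rho0 < r < rp -> B r < 0) ->
  (forall c, is_horizon Plus A B rm rp c <-> c = rho1) /\
  (forall c, is_horizon Minus A B rm rp c <-> c = rho2).
Proof.
  intros Hrm _ _ _ _ _ _ _ Hergo HA H1 H12 H2 HA1 HA2 Honly H0 _ HBl HBr.
  assert (HB1 : B rho1 > 0) by (apply HBl; lra).
  assert (HB2 : B rho2 < 0) by (apply HBr; lra).
  split; intro c; rewrite is_horizon_iff by assumption; simpl; split.
  - intros [Hc [HAc HBc]].
    destruct (Honly c Hc HAc) as [-> | ->]; [reflexivity | lra].
  - intros ->; repeat split; lra.
  - intros [Hc [HAc HBc]].
    destruct (Honly c Hc HAc) as [-> | ->]; [lra | reflexivity].
  - intros ->; repeat split; lra.
Qed.
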